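(* Under the setup described in the context, for every $k\in\mathbb{Z}_+$, $$p_k:=\upsilon^\rho_\xi\big(I^k_0\text{ is bad}\big)\le L_k^{-\alpha}.$$
   Context: Let $\xi$ be an aperiodic positive integer-valued random variable with $\mathbb{E}(\xi^{1+\varepsilon})<\infty$ for some $\varepsilon>0$. Let $\rho$ be the stationary delay: $\mathbb{P}(\rho=k)=\frac{1}{\mathbb{E}(\xi)}\sum_{i\ge k+1}\mathbb{P}(\xi=i)$, $k\in\mathbb{Z}_+$, independent of i.i.d. copies $\xi_1,\xi_2,\dots$ of $\xi$. Under $\upsilon^\rho_\xi$, the environment is the random set $\Lambda=\{X_0,X_1,\dots\}\subseteq\mathbb{Z}_+$ where $X_0=\rho$, $X_i=X_{i-1}+\xi_i$. Let $c_1=c_1(\xi,\varepsilon)\in(0,\infty)$ be a constant such that, writing $Y_n=\mathbf 1_{\{n\in\Lambda\}}$, for all $n,m\in\mathbb{Z}_+$ and all events $A\in\sigma(Y_i;0\le i\le m)$, $B\in\sigma(Y_i;i\ge m+n)$ one has $\upsilon^\rho_\xi(A\cap B)\le\upsilon^\rho_\xi(A)\upsilon^\rho_\xi(B)+c_1n^{-\varepsilon}$ (such a constant exists). Fix $\alpha\in(0,\varepsilon/2]$ and $\gamma\in(1,1+\frac{\alpha}{\alpha+2})$, and let $L_0\in\mathbb{Z}_+$ satisfy: (i) $L_0^{\gamma-1}\ge3$; (ii) $L_0^{\varepsilon-\alpha}\ge\mathbb{E}(\rho^\varepsilon)$; (iii) $L_0^{c_2}\ge c_1+1$ where $c_2=2+2\alpha-\gamma\alpha-2\gamma>0$.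 Define $L_k=L_{k-1}\lfloor L_{k-1}^{\gamma-1}\rfloor$ for $k\ge1$. For $j,k\in\mathbb{Z}_+$ let the block $I^k_j=[jL_k,(j+1)L_k)\cap\mathbb{Z}_+$ and $l_{k,j}=\{j\lfloor L_{k-1}^{\gamma-1}\rfloor,\dots,(j+1)\lfloor L_{k-1}^{\gamma-1}\rfloor-1\}$ (so $I^k_j=\bigcup_{i\in l_{k,j}}I^{k-1}_i$). For an environment $\Lambda\subseteq\mathbb{Z}_+$: $I^0_j$ is bad if $\Lambda\cap I^0_j=\varnothing$; for $k\ge1$, $I^k_j$ is bad if there exist $i_1,i_2\in l_{k,j}$ with $|i_1-i_2|\ge2$ such that $I^{k-1}_{i_1}$ and $I^{k-1}_{i_2}$ are both bad. A block is good if it is not bad. *)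

From Stdlib Require Import Reals Lia Arith ZArith List.
From Stdlib Require Import Classical ClassicalEpsilon.
Open Scope R_scope.

(* Value of a series sum_{i>=0} f i (0 if it does not converge). *)
Definition Series (f : nat -> R) : R :=
  match excluded_middle_informative (exists l, infinite_sum f l) with
  | left H => proj1_sig (constructive_indefinite_description _ H)
  | right _ => 0
  end.

Definition ind (P : Prop) : R :=
  if excluded_middle_informative P then 1 else 0.

(* x^e for x >= 0 with the convention 0^e = 0 (used for e > 0). *)
Definition rpow (x e : R) : R := if Req_EM_T x 0 then 0 else Rpower x e.

(* floor of a real, as a nat (0 for negative reals) *)
Definition floorN (x : R) : nat := Z.to_nat (Int_part x).

(* ---- the law of xi: p i = P(xi = i) ---- *)
Definition is_pmf (p : nat -> R) : Prop :=
  (forall i, 0 <= p i) /\ infinite_sum p 1.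

Definition positive_valued (p : nat -> R) : Prop := p 0%nat = 0.

Definition aperiodic (p : nat -> R) : Prop :=
  forall d : nat, (forall i : nat, 0 < p i -> Nat.divide d i) -> d = 1%nat.

Definition mean (p : nat -> R) : R := Series (fun i => p i * INR i).

(* stationary delay: P(rho = k) = (1/E xi) * sum_{i >= k+1} P(xi = i) *)
Definition prho (p : nat -> R) (k : nat) : R :=
  / mean p * Series (fun i => p (k + 1 + i)%nat).

(* xs i is xi_{i+1}; X_0 = r, X_j = r + xi_1 + ... + xi_j *)
Fixpoint Xpos (r : nat) (xs : nat -> nat) (j : nat) : nat :=
  match j with
  | O => r
  | S j' => (Xpos r xs j' + xs j')%nat
  end.

(* Y_n = 1_{n in Lambda}; since xi >= 1, X_j >= j, so only j <= n matter. *)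
Definition Lam (r : nat) (xs : nat -> nat) (n : nat) : bool :=
  existsb (fun j => Nat.eqb (Xpos r xs j) n) (seq 0 (S n)).

Definition ncons (x : nat) (xs : nat -> nat) : nat -> nat :=
  fun i => match i with O => x | S i' => xs i' end.

(* E[ f(xi_1, ..., xi_N, 0, 0, ...) ] for xi_i i.i.d. with law p *)
Fixpoint EX (p : nat -> R) (N : nat) (f : (nat -> nat) -> R) : R :=
  match N with
  | O => f (fun _ => 0%nat)
  | S N' => Series (fun x => p x * EX p N' (fun xs => f (ncons x xs)))
  end.

(* Probability, under upsilon^rho_xi, of an event E about the environment
   (Y_n)_n which only depends on Y_0, ..., Y_{N-1}.  Since xi >= 1,
   Lambda /\ [0,N) is determined by rho, xi_1, ..., xi_N. *)
Definition envP (p : nat -> R) (N : nat) (E : (nat -> bool) -> Prop) : R :=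
  Series (fun r => prho p r * EX p N (fun xs => ind (E (Lam r xs)))).

Definition dep_on (E : (nat -> bool) -> Prop) (a b : nat) : Prop :=
  forall y y' : nat -> bool,
    (forall i, (a <= i <= b)%nat -> y i = y' i) -> (E y <-> E y').

Fixpoint Lsc (L0 : nat) (g : R) (k : nat) : nat :=
  match k with
  | O => L0
  | S k' => (Lsc L0 g k' * floorN (Rpower (INR (Lsc L0 g k')) (g - 1)))%nat
  end.

Definition mfac (L0 : nat) (g : R) (k : nat) : nat :=
  floorN (Rpower (INR (Lsc L0 g k)) (g - 1)).

(* bad L0 g y k j : block I^k_j = [j L_k, (j+1) L_k) is bad in environment y *)
Fixpoint bad (L0 : nat) (g : R) (y : nat -> bool) (k j : nat) : Prop :=
  match k with
  | O => forall i, (j * L0 <= i < (j + 1) * L0)%nat -> y i = false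
  | S k' =>
      exists i1 i2,
        (j * mfac L0 g k' <= i1 < (j + 1) * mfac L0 g k')%nat /\
        (j * mfac L0 g k' <= i2 < (j + 1) * mfac L0 g k')%nat /\
        (i1 + 2 <= i2 \/ i2 + 2 <= i1)%nat /\
        bad L0 g y k' i1 /\ bad L0 g y k' i2
  end.

(* The block I^0_0 is bad iff rho >= L_0, so Markov's inequality for
   rho^eps together with (ii) gives p_0 <= L_0^-alpha.  If I^(k+1)_0 is bad, it contains
   two bad subblocks I^k_i1, I^k_i2 with i1 + 2 <= i2, hence separated by a gap of at
   least L_k.  The environment is stationary (a shift by one unit amounts to the renewal
   equation P(rho = r) = P(rho = r+1) + P(rho = 0) P(xi = r+1)), so each subblock is bad
   with probability p_k and the mixing bound gives p_k^2 + c1 L_k^-eps for each pair.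
   A union bound over the pairs, of which there are fewer than m_k^2 with
   m_k = floor(L_k^(gamma-1)), yields p_(k+1) <= m_k^2 (L_k^-2alpha + c1 L_k^-eps), and
   (iii) with alpha <= eps/2 turns this into L_(k+1)^-alpha. *)

From Coquelicot Require Import Coquelicot.
From Stdlib Require Import Reals Lia Lra FunctionalExtensionality ClassicalEpsilon ZArith List Bool.
Open Scope R_scope.

Notation CSeries := Coquelicot.Series.Series.

Lemma Series_of_is_series f l : is_series f l -> Series f = l.
Proof.
  intros H. apply is_series_Reals in H. unfold Series.
  destruct excluded_middle_informative as [e|n].
  - destruct (constructive_indefinite_description _ e) as [l' Hl']; simpl.
    eapply uniqueness_sum; eauto.
  - exfalso; apply n; eauto.
Qed.

Lemma Series_to_Coquelicot f : ex_series f -> Series f = CSeries f.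
Proof. intros H; apply Series_of_is_series, Series_correct, H. Qed.

Lemma Series_eq_ext a b : (forall n, a n = b n) -> Series a = Series b.
Proof. intros H; f_equal; apply functional_extensionality; auto. Qed.

Lemma ex_series_eq_ext (a b : nat -> R) : (forall n, a n = b n) -> ex_series a -> ex_series b.
Proof. intros H; replace b with a; auto; apply functional_extensionality; auto. Qed.

Lemma ex_series_nonneg_le a b : (forall n, 0 <= a n <= b n) -> ex_series b -> ex_series a.
Proof.
  intros H Hb. apply (ex_series_le a b); auto.
  intros n; specialize (H n). change (Rabs (a n) <= b n). rewrite Rabs_pos_eq; lra.
Qed.

Lemma Series_mono a b : (forall n, 0 <= a n <= b n) -> ex_series b -> Series a <= Series b.
Proof.
  intros H Hb. rewrite !Series_to_Coquelicot; auto; [|eapply ex_series_nonneg_le; eauto].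
  apply Series_le; auto.
Qed.

Lemma Series_zero : Series (fun _ => 0) = 0.
Proof.
  apply Series_of_is_series, is_series_Reals. intros e He. exists 0%nat.
  intros n _. rewrite sum_cte. unfold R_dist. rewrite Rmult_0_l, Rminus_0_r, Rabs_R0. lra.
Qed.

Lemma Series_nonneg a : (forall n, 0 <= a n) -> ex_series a -> 0 <= Series a.
Proof.
  intros H Ha. rewrite <- Series_zero. apply Series_mono; auto. intros n; specialize (H n); lra.
Qed.

Lemma Series_add a b : ex_series a -> ex_series b ->
  Series (fun n => a n + b n) = Series a + Series b.
Proof.
  intros. rewrite !Series_to_Coquelicot; auto; [apply Series_plus; auto|].
  apply (ex_series_plus a b); auto.
Qed.

Lemma Series_scal c a : ex_series a -> Series (fun n => c * a n) = c * Series a.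
Proof.
  intros. rewrite !Series_to_Coquelicot; auto; [apply Series_scal_l|].
  apply (ex_series_scal_l c a); auto.
Qed.

Lemma Series_split_first a : ex_series a -> Series a = a 0%nat + Series (fun k => a (S k)).
Proof.
  intros H. rewrite !Series_to_Coquelicot; auto; [apply Series_incr_1; auto|].
  apply (ex_series_incr_1 a); auto.
Qed.

Lemma ex_series_of_bounded_partial_sums (a : nat -> R) B :
  (forall n, 0 <= a n) -> (forall N, sum_f_R0 a N <= B) -> ex_series a.
Proof.
  intros H0 HB. destruct (growing_cv (sum_f_R0 a)) as [l Hl].
  - intros n. simpl. specialize (H0 (S n)). lra.
  - exists B. intros x [N ->]. auto.
  - exists l. apply is_series_Reals. exact Hl.
Qed.

Lemma Series_sum_f_R0 (F : nat -> nat -> R) N : (forall r, ex_series (F r)) ->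
  ex_series (fun j => sum_f_R0 (fun r => F r j) N) /\
  Series (fun j => sum_f_R0 (fun r => F r j) N) = sum_f_R0 (fun r => Series (F r)) N.
Proof.
  intros H. induction N as [|N [IH1 IH2]]; simpl; [split; auto|].
  split; [apply (ex_series_plus _ (fun j => F (S N) j)); auto|].
  rewrite Series_add, IH2; auto.
Qed.

Lemma pmf_ex_series p : is_pmf p -> ex_series p.
Proof. intros [_ H]. exists 1. apply is_series_Reals; auto. Qed.

Lemma pmf_Series p : is_pmf p -> Series p = 1.
Proof. intros [_ H]. apply Series_of_is_series, is_series_Reals; auto. Qed.

Lemma pmf_ex_series_mul p c : is_pmf p -> ex_series (fun x => p x * c).
Proof.
  intros Hp. apply (ex_series_eq_ext (fun x => c * p x)); [intros; ring|].
  apply (ex_series_scal_l c p), pmf_ex_series; auto.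
Qed.

Lemma pmf_Series_mul p c : is_pmf p -> Series (fun x => p x * c) = c.
Proof.
  intros Hp. rewrite (Series_eq_ext _ (fun x => c * p x)) by (intros; ring).
  rewrite Series_scal, pmf_Series by (auto; apply pmf_ex_series; auto). ring.
Qed.

Lemma pmf_tail_ex_series p r : is_pmf p -> ex_series (fun i => p (r + 1 + i)%nat).
Proof. intros Hp. apply (ex_series_incr_n p (r + 1)), pmf_ex_series; auto. Qed.

Lemma pmf_tail_nonneg p r : is_pmf p -> 0 <= Series (fun i => p (r + 1 + i)%nat).
Proof. intros Hp. apply Series_nonneg; [intros; apply Hp|apply pmf_tail_ex_series; auto]. Qed.

Definition bounded_by {T} (B : R) (f : T -> R) : Prop := forall x, 0 <= f x <= B.

Definition depends_on_first (K : nat) (f : (nat -> nat) -> R) : Prop :=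
  forall xs xs', (forall i, (i < K)%nat -> xs i = xs' i) -> f xs = f xs'.

Lemma EX_S p N f : EX p (S N) f = Series (fun x => p x * EX p N (fun xs => f (ncons x xs))).
Proof. reflexivity. Qed.

Lemma EX_bounded p N : is_pmf p -> forall f B, bounded_by B f -> 0 <= EX p N f <= B.
Proof.
  intros Hp. induction N as [|N IH]; intros f B Hf; [apply Hf|].
  assert (Hx : forall x, 0 <= p x * EX p N (fun xs => f (ncons x xs)) <= p x * B).
  { intros x. pose proof (proj1 Hp x).
    pose proof (IH (fun xs => f (ncons x xs)) B (fun xs => Hf _)).
    split; [apply Rmult_le_pos|apply Rmult_le_compat_l]; lra. }
  rewrite EX_S. split.
  - apply Series_nonneg; [intros; apply Hx|].
    eapply ex_series_nonneg_le; [apply Hx|apply pmf_ex_series_mul; auto].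
  - rewrite <- (pmf_Series_mul p B Hp). apply Series_mono; [apply Hx|apply pmf_ex_series_mul; auto].
Qed.

Lemma ex_series_EX_step p N f B : is_pmf p -> bounded_by B f ->
  ex_series (fun x => p x * EX p N (fun xs => f (ncons x xs))).
Proof.
  intros Hp Hf. apply (ex_series_nonneg_le _ (fun x => p x * B)); [|apply pmf_ex_series_mul; auto].
  intros x. pose proof (proj1 Hp x).
  pose proof (EX_bounded p N Hp (fun xs => f (ncons x xs)) B (fun xs => Hf _)).
  split; [apply Rmult_le_pos|apply Rmult_le_compat_l]; lra.
Qed.

Lemma EX_add p N : is_pmf p -> forall f g B B', bounded_by B f -> bounded_by B' g ->
  EX p N (fun xs => f xs + g xs) = EX p N f + EX p N g.
Proof.
  intros Hp. induction N as [|N IH]; intros f g B B' Hf Hg; [reflexivity|].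
  rewrite !EX_S, <- Series_add by (eapply ex_series_EX_step; eauto).
  apply Series_eq_ext. intros x.
  rewrite (IH (fun xs => f (ncons x xs)) (fun xs => g (ncons x xs)) B B'); try ring;
    intros xs; auto.
Qed.

Lemma EX_const p N c : is_pmf p -> EX p N (fun _ => c) = c.
Proof.
  intros Hp. induction N as [|N IH]; [reflexivity|].
  rewrite EX_S, IH. apply pmf_Series_mul; auto.
Qed.

Lemma EX_ext_positive p N : positive_valued p -> forall f g,
  (forall xs, (forall i, (i < N)%nat -> (1 <= xs i)%nat) -> f xs = g xs) ->
  EX p N f = EX p N g.
Proof.
  intros Hz. induction N as [|N IH]; intros f g H.
  - apply H. intros; lia.
  - rewrite !EX_S. apply Series_eq_ext. intros [|x]; [rewrite Hz; ring|].
    f_equal. apply IH. intros xs Hxs. apply H. intros [|i] Hi; simpl; [lia|]. apply Hxs; lia.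
Qed.

Lemma EX_S_indep p N : is_pmf p ->
  forall f, depends_on_first N f -> EX p (S N) f = EX p N f.
Proof.
  intros Hp. induction N as [|N IH]; intros f Hf.
  - rewrite EX_S. simpl. rewrite (Series_eq_ext _ (fun x => p x * f (fun _ => 0%nat))).
    + apply pmf_Series_mul; auto.
    + intros x. f_equal. apply Hf. intros; lia.
  - rewrite EX_S, (EX_S p N f). apply Series_eq_ext; intros x. f_equal.
    apply IH; intros xs xs' H; apply Hf; intros [|i] Hi; simpl; auto; apply H; lia.
Qed.

Lemma depends_on_first_mono K K' f :
  (K <= K')%nat -> depends_on_first K f -> depends_on_first K' f.
Proof. intros HK H xs xs' E. apply H. intros; apply E; lia. Qed.

Lemma EX_indep p K N f : is_pmf p -> depends_on_first K f -> (K <= N)%nat ->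
  EX p N f = EX p K f.
Proof.
  intros Hp Hf HKN. induction HKN as [|N HKN IH]; [reflexivity|].
  rewrite <- IH. apply EX_S_indep; auto. eapply depends_on_first_mono; eassumption.
Qed.

Definition shift (s : nat) (y : nat -> bool) : nat -> bool := fun n => y (n + s)%nat.

Definition depends_on_prefix (K : nat) (E : (nat -> bool) -> Prop) : Prop :=
  forall y y', (forall i, (i < K)%nat -> y i = y' i) -> (E y <-> E y').

Lemma depends_on_prefix_shift1 N E :
  depends_on_prefix N E -> depends_on_prefix (S N) (fun y => E (shift 1 y)).
Proof. intros H y y' Hy. apply H. intros i Hi. apply Hy. lia. Qed.

(* The shift identities for [Lam] need positive gaps; when [p 0 = 0] they can be
   forced at no cost, see [EX_posify]. *)
Definition posify (xs : nat -> nat) : nat -> nat := fun i => Nat.max 1 (xs i).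

Lemma posify_ge1 xs i : (1 <= posify xs i)%nat.
Proof. unfold posify; lia. Qed.

Lemma posify_ncons x xs : posify (ncons x xs) = ncons (Nat.max 1 x) (posify xs).
Proof. apply functional_extensionality; intros [|i]; reflexivity. Qed.

Lemma EX_posify p M f : positive_valued p -> depends_on_first M f ->
  EX p M (fun xs => f (posify xs)) = EX p M f.
Proof.
  intros Hz Hf. apply EX_ext_positive; auto. intros xs Hxs. apply Hf. intros i Hi.
  unfold posify. specialize (Hxs i Hi). lia.
Qed.

Lemma Xpos_ge_start r xs j : (r <= Xpos r xs j)%nat.
Proof. induction j; simpl; lia. Qed.

Lemma Xpos_ge_index r xs j : (forall i, 1 <= xs i)%nat -> (r + j <= Xpos r xs j)%nat.
Proof. intros H; induction j; simpl; [lia|]. specialize (H j); lia. Qed.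

Lemma Xpos_ext r xs xs' j :
  (forall i, (i < j)%nat -> xs i = xs' i) -> Xpos r xs j = Xpos r xs' j.
Proof.
  induction j; intros H; simpl; auto.
  rewrite IHj, H by (try intros; try apply H; lia). reflexivity.
Qed.

Lemma Xpos_succ_start r xs j : Xpos (S r) xs j = S (Xpos r xs j).
Proof. induction j; simpl; auto. rewrite IHj; auto. Qed.

Lemma Xpos_first_gap r xs j : Xpos r xs (S j) = Xpos (r + xs 0%nat) (fun i => xs (S i)) j.
Proof. induction j; simpl; auto. Qed.

Lemma Lam_spec r xs n : Lam r xs n = true <-> exists j, (j <= n)%nat /\ Xpos r xs j = n.
Proof.
  unfold Lam. rewrite existsb_exists. split.
  - intros [j [Hj E]]. apply in_seq in Hj. apply Nat.eqb_eq in E. exists j; split; [lia|auto].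
  - intros [j [Hj E]]. exists j; split; [apply in_seq; lia|apply Nat.eqb_eq; auto].
Qed.

Lemma Lam_spec_pos r xs n : (forall i, 1 <= xs i)%nat ->
  (Lam r xs n = true <-> exists j, Xpos r xs j = n).
Proof.
  intros Hp. rewrite Lam_spec. split; [intros [j [_ E]]; eauto|].
  intros [j E]. exists j; split; auto. pose proof (Xpos_ge_index r xs j Hp). lia.
Qed.

Lemma Lam_ext r xs xs' n : (forall i, (i < n)%nat -> xs i = xs' i) -> Lam r xs n = Lam r xs' n.
Proof.
  intros H. apply eq_true_iff_eq. rewrite !Lam_spec.
  split; intros [j [Hj E]]; exists j; split; auto;
    rewrite <- E; apply Xpos_ext; intros i Hi; [symmetry|]; apply H; lia.
Qed.

Lemma shift1_Lam_succ r xs : (forall i, 1 <= xs i)%nat -> shift 1 (Lam (S r) xs) = Lam r xs.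
Proof.
  intros Hp. apply functional_extensionality; intros n. unfold shift.
  apply eq_true_iff_eq. rewrite !Lam_spec_pos by auto.
  setoid_rewrite Xpos_succ_start. split; intros [j E]; exists j; lia.
Qed.

Lemma shift1_Lam_zero x xs : (forall i, 1 <= xs i)%nat ->
  shift 1 (Lam 0 (ncons (S x) xs)) = Lam x xs.
Proof.
  intros Hp.
  assert (Hp' : forall i, (1 <= ncons (S x) xs i)%nat) by (intros [|i]; simpl; auto; lia).
  apply functional_extensionality; intros n. unfold shift.
  apply eq_true_iff_eq. rewrite !Lam_spec_pos by auto. split.
  - intros [[|j] E]; [simpl in E; lia|]. rewrite Xpos_first_gap in E. simpl in E.
    rewrite Xpos_succ_start in E. exists j. change (fun i => xs i) with xs in E. lia.
  - intros [j E]. exists (S j). rewrite Xpos_first_gap. simpl.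
    rewrite Xpos_succ_start. change (fun i => xs i) with xs. lia.
Qed.

Lemma ind_ext (P Q : Prop) : (P <-> Q) -> ind P = ind Q.
Proof.
  intros H. unfold ind.
  destruct excluded_middle_informative; destruct excluded_middle_informative; tauto.
Qed.

Lemma ind_bounds (P : Prop) : 0 <= ind P <= 1.
Proof. unfold ind. destruct excluded_middle_informative; lra. Qed.

Lemma ind_true (P : Prop) : P -> ind P = 1.
Proof. unfold ind. destruct excluded_middle_informative; tauto. Qed.

Lemma ind_false (P : Prop) : ~ P -> ind P = 0.
Proof. unfold ind. destruct excluded_middle_informative; tauto. Qed.

Lemma Rpower_gt0 x y : 0 < Rpower x y.
Proof. apply exp_pos. Qed.

Lemma Rpower_INR_le1 L x : (L <= 1)%nat -> Rpower (INR L) x = 1.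
Proof.
  intros H. destruct L as [|[|L]]; [| |lia].
  - change (INR 0) with 0. unfold Rpower, ln.
    destruct Rlt_dec as [r|r]; [exfalso; exact (Rlt_irrefl 0 r)|].
    rewrite Rmult_0_r, exp_0; auto.
  - change (INR 1) with 1. unfold Rpower. rewrite ln_1, Rmult_0_r, exp_0; auto.
Qed.

Lemma rpow_nonneg x e : 0 <= rpow x e.
Proof. unfold rpow. destruct Req_EM_T; [lra|]. left; apply Rpower_gt0. Qed.

Lemma rpow_INR_succ n e : rpow (INR (S n)) e = Rpower (INR (S n)) e.
Proof.
  unfold rpow. destruct Req_EM_T as [E|]; auto.
  pose proof (lt_0_INR (S n) ltac:(lia)). lra.
Qed.

Lemma rpow_INR_mono j j' e : 0 <= e -> (j <= j')%nat -> rpow (INR j) e <= rpow (INR j') e.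
Proof.
  intros He Hj. destruct j as [|j].
  - simpl. unfold rpow at 1. destruct Req_EM_T; [apply rpow_nonneg|lra].
  - destruct j' as [|j']; [lia|]. rewrite !rpow_INR_succ. apply Rle_Rpower_l; auto.
    split; [apply lt_0_INR; lia|apply le_INR; auto].
Qed.

Lemma rpow_INR_succ_ge1 n e : 0 <= e -> 1 <= rpow (INR (S n)) e.
Proof.
  intros He. rewrite rpow_INR_succ, <- (Rpower_O (INR (S n))) by (apply lt_0_INR; lia).
  apply Rle_Rpower; auto. rewrite S_INR; pose proof (pos_INR n); lra.
Qed.

Lemma sum_indicator_lt j R c : 0 <= c ->
  sum_f_R0 (fun r => if (r <? j)%nat then c else 0) R = INR (Nat.min (S R) j) * c.
Proof.
  intros Hc. induction R as [|R IH]; [destruct j; simpl; ring|].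
  rewrite tech5. cbv beta. rewrite IH. destruct (Nat.ltb_spec (S R) j).
  - replace (Nat.min (S (S R)) j) with (S (Nat.min (S R) j)) by lia. rewrite S_INR; ring.
  - replace (Nat.min (S (S R)) j) with (Nat.min (S R) j) by lia. ring.
Qed.

(* The discrete identity [sum_r P(X > r) = E X], as an inequality for partial sums. *)
Lemma sum_tails_le_first_moment (q : nat -> R) N : (forall j, 0 <= q j) ->
  ex_series q -> ex_series (fun j => INR j * q j) ->
  sum_f_R0 (fun r => Series (fun i => q (r + 1 + i)%nat)) N <= Series (fun j => INR j * q j).
Proof.
  intros Hq0 Hq Hm.
  set (I := fun r j => if (r <? j)%nat then q j else 0).
  assert (HI : forall r j, 0 <= I r j <= q j).
  { intros r j; unfold I; destruct (r <? j)%nat; split; auto; lra. }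
  assert (HIe : forall r, ex_series (I r)) by (intros; eapply ex_series_nonneg_le; [apply HI|auto]).
  assert (Htail : forall r, Series (fun i => q (r + 1 + i)%nat) = Series (I r)).
  { intros r. rewrite !Series_to_Coquelicot; auto; [|apply (ex_series_incr_n q (r + 1)); auto].
    rewrite (Series_incr_n_aux (I r) (r + 1)).
    - apply Series_ext. intros k. unfold I. destruct (Nat.ltb_spec r (r + 1 + k)); auto; lia.
    - intros k Hk. unfold I. destruct (Nat.ltb_spec r k); auto; lia. }
  rewrite (sum_eq _ (fun r => Series (I r))) by auto.
  destruct (Series_sum_f_R0 I N HIe) as [Hs1 <-].
  apply Series_mono; auto. intros j.
  replace (sum_f_R0 (fun r => I r j) N) with (INR (Nat.min (S N) j) * q j)
    by (rewrite <- sum_indicator_lt by auto; reflexivity).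
  split; [apply Rmult_le_pos; auto; apply pos_INR|].
  apply Rmult_le_compat_r; auto. apply le_INR; lia.
Qed.

Section DelayLaw.

Variables (p : nat -> R) (eps : R).
Hypotheses (Hp : is_pmf p) (Hpos : positive_valued p) (Heps : 0 < eps)
  (Hmom : exists l, infinite_sum (fun i => p i * Rpower (INR i) (1 + eps)) l).

Lemma mean_ex_series : ex_series (fun i => p i * INR i).
Proof.
  destruct Hmom as [l Hl]. apply (ex_series_nonneg_le _ (fun i => p i * Rpower (INR i) (1 + eps))).
  - intros [|i].
    + rewrite Hpos. simpl. lra.
    + pose proof (proj1 Hp (S i)). split; [apply Rmult_le_pos; auto; apply pos_INR|].
      apply Rmult_le_compat_l; auto.
      rewrite <- (Rpower_1 (INR (S i))) at 1 by (apply lt_0_INR; lia).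
      apply Rle_Rpower; [rewrite S_INR; pose proof (pos_INR i); lra|lra].
  - exists l. apply is_series_Reals; auto.
Qed.

Lemma mean_ge1 : 1 <= mean p.
Proof.
  unfold mean. rewrite <- (pmf_Series p Hp). apply Series_mono; [|apply mean_ex_series].
  intros [|i]; split; try apply Hp.
  - rewrite Hpos; simpl; lra.
  - pose proof (proj1 Hp (S i)). rewrite <- (Rmult_1_r (p (S i))) at 1.
    apply Rmult_le_compat_l; auto. rewrite S_INR; pose proof (pos_INR i); lra.
Qed.

Lemma prho_nonneg r : 0 <= prho p r.
Proof.
  unfold prho. apply Rmult_le_pos; [|apply pmf_tail_nonneg; auto].
  left; apply Rinv_0_lt_compat. pose proof mean_ge1; lra.
Qed.

Lemma prho_moment_ex_series : ex_series (fun r => prho p r * rpow (INR r) eps).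
Proof.
  set (q := fun j => p j * rpow (INR j) eps).
  assert (Hq0 : forall j, 0 <= q j) by (intros; apply Rmult_le_pos; [apply Hp|apply rpow_nonneg]).
  assert (Hm : ex_series (fun j => INR j * q j)).
  { destruct Hmom as [l Hl]. apply (ex_series_eq_ext (fun i => p i * Rpower (INR i) (1 + eps))).
    - intros [|j]; unfold q; [rewrite Hpos; simpl; ring|].
      rewrite rpow_INR_succ, Rpower_plus, Rpower_1 by (apply lt_0_INR; lia). ring.
    - exists l; apply is_series_Reals; auto. }
  assert (Hq : ex_series q).
  { apply (ex_series_nonneg_le _ (fun j => INR j * q j)); auto. intros [|j]; split; auto.
    - unfold q; rewrite Hpos; simpl; lra.
    - rewrite <- (Rmult_1_l (q (S j))) at 1. apply Rmult_le_compat_r; auto.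
      rewrite S_INR; pose proof (pos_INR j); lra. }
  assert (Hmu : 0 < / mean p) by (apply Rinv_0_lt_compat; pose proof mean_ge1; lra).
  assert (Hterm : forall r, 0 <= prho p r * rpow (INR r) eps
                              <= / mean p * Series (fun i => q (r + 1 + i)%nat)).
  { intros r. split; [apply Rmult_le_pos; [apply prho_nonneg|apply rpow_nonneg]|].
    unfold prho. rewrite Rmult_assoc. apply Rmult_le_compat_l; [lra|].
    rewrite Rmult_comm, <- Series_scal by (apply pmf_tail_ex_series; auto).
    apply Series_mono; [|apply (ex_series_incr_n q (r + 1)); auto].
    intros n. split; [apply Rmult_le_pos; [apply rpow_nonneg|apply Hp]|].
    unfold q. rewrite Rmult_comm. apply Rmult_le_compat_l; [apply Hp|].
    apply rpow_INR_mono; [lra|lia]. }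
  apply (ex_series_of_bounded_partial_sums _ (/ mean p * Series (fun j => INR j * q j))).
  - intros; apply Hterm.
  - intros N. eapply Rle_trans; [apply sum_Rle; intros n _; apply Hterm|].
    rewrite (sum_eq _ (fun r => Series (fun i => q (r + 1 + i)%nat) * / mean p))
      by (intros; ring).
    rewrite <- scal_sum. apply Rmult_le_compat_l; [lra|].
    apply sum_tails_le_first_moment; auto.
Qed.

Lemma prho_ex_series : ex_series (prho p).
Proof.
  apply (ex_series_incr_1 (prho p)).
  apply (ex_series_nonneg_le _ (fun k => prho p (S k) * rpow (INR (S k)) eps)).
  - intros k. pose proof (prho_nonneg (S k)). split; auto.
    rewrite <- (Rmult_1_r (prho p (S k))) at 1.
    apply Rmult_le_compat_l; auto. apply rpow_INR_succ_ge1; lra.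
  - apply (ex_series_incr_1 (fun r => prho p r * rpow (INR r) eps)), prho_moment_ex_series.
Qed.

End DelayLaw.

Lemma prho_succ p r : is_pmf p -> positive_valued p ->
  prho p r = prho p (S r) + prho p 0 * p (S r).
Proof.
  intros Hp Hz. unfold prho.
  assert (E0 : Series (fun i => p (0 + 1 + i)%nat) = 1).
  { rewrite <- (pmf_Series p Hp), (Series_split_first p (pmf_ex_series p Hp)), Hz, Rplus_0_l.
    apply Series_eq_ext; intros; f_equal; lia. }
  rewrite E0, (Series_split_first _ (pmf_tail_ex_series p r Hp)).
  replace (p (r + 1 + 0)%nat) with (p (S r)) by (f_equal; lia).
  rewrite (Series_eq_ext (fun k => p (r + 1 + S k)%nat) (fun i => p (S r + 1 + i)%nat))
    by (intros; f_equal; lia).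
  ring.
Qed.

Fixpoint fsum (n : nat) (f : nat -> R) : R :=
  match n with O => 0 | S n' => fsum n' f + f n' end.

Lemma fsum_bounds n f B : (forall i, 0 <= f i <= B) -> 0 <= fsum n f <= INR n * B.
Proof.
  intros H. induction n as [|n IH]; simpl fsum; [simpl; lra|]. specialize (H n).
  rewrite S_INR. lra.
Qed.

Lemma fsum_mono n f g : (forall i, (i < n)%nat -> f i <= g i) -> fsum n f <= fsum n g.
Proof.
  induction n as [|n IH]; simpl; intros H; [lra|].
  pose proof (H n ltac:(lia)). pose proof (IH ltac:(intros; apply H; lia)). lra.
Qed.

Lemma fsum_term_le n f i : (forall i, 0 <= f i) -> (i < n)%nat -> f i <= fsum n f.
Proof.
  intros H0. induction n as [|n IH]; intros Hi; [lia|]. simpl.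
  assert (0 <= fsum n f) by (clear -H0; induction n; simpl; [lra|]; pose proof (H0 n); lra).
  destruct (Nat.eq_dec i n) as [->|Hne]; [lra|]. pose proof (IH ltac:(lia)). pose proof (H0 n). lra.
Qed.

Lemma fsum_const n c : fsum n (fun _ => c) = INR n * c.
Proof. induction n as [|n IH]; simpl fsum; [simpl; ring|]. rewrite IH, S_INR. ring. Qed.

Section Stationarity.

Variable p : nat -> R.
Hypotheses (Hp : is_pmf p) (Hpos : positive_valued p)
  (Hrho_nonneg : forall r, 0 <= prho p r) (Hrho : ex_series (prho p)).

Definition env_ind (r : nat) (E : (nat -> bool) -> Prop) (xs : nat -> nat) : R :=
  ind (E (Lam r xs)).

Lemma envP_unfold N E : envP p N E = Series (fun r => prho p r * EX p N (env_ind r E)).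
Proof. reflexivity. Qed.

Lemma env_ind_depends K r E :
  depends_on_prefix K E -> depends_on_first K (env_ind r E).
Proof.
  intros H xs xs' Hx. apply ind_ext, H. intros i Hi.
  apply Lam_ext. intros; apply Hx; lia.
Qed.

Lemma EX_env_ind_bounds N r E : 0 <= EX p N (env_ind r E) <= 1.
Proof. apply EX_bounded; auto. intros xs; apply ind_bounds. Qed.

Lemma ex_series_prho_mul (a : nat -> R) : (forall r, 0 <= a r <= 1) ->
  ex_series (fun r => prho p r * a r).
Proof.
  intros Ha. apply (ex_series_nonneg_le _ (prho p)); auto. intros r.
  specialize (Ha r); specialize (Hrho_nonneg r). split; [apply Rmult_le_pos; lra|].
  rewrite <- (Rmult_1_r (prho p r)) at 2. apply Rmult_le_compat_l; lra.
Qed.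

Lemma envP_ext N E E' : (forall y, E y <-> E' y) -> envP p N E = envP p N E'.
Proof.
  intros H. rewrite !envP_unfold. apply Series_eq_ext. intros r. do 2 f_equal.
  apply functional_extensionality; intros xs. apply ind_ext; auto.
Qed.

Lemma envP_nonneg N E : 0 <= envP p N E.
Proof.
  rewrite envP_unfold. apply Series_nonneg.
  - intros r; apply Rmult_le_pos; auto; apply EX_env_ind_bounds.
  - apply ex_series_prho_mul. intros; apply EX_env_ind_bounds.
Qed.

Lemma envP_horizon K N E : depends_on_prefix K E -> (K <= N)%nat ->
  envP p N E = envP p K E.
Proof.
  intros HE HKN. rewrite !envP_unfold. apply Series_eq_ext; intros r. f_equal.
  apply EX_indep; auto. apply env_ind_depends; auto.
Qed.

Lemma EX_shift1_succ_start N E r : depends_on_prefix N E ->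
  EX p (S N) (env_ind (S r) (fun y => E (shift 1 y))) = EX p N (env_ind r E).
Proof.
  intros HE. pose proof (env_ind_depends N r E HE) as Hd.
  rewrite <- EX_posify by (auto; apply env_ind_depends, depends_on_prefix_shift1; auto).
  transitivity (EX p (S N) (fun xs => env_ind r E (posify xs))).
  - f_equal. apply functional_extensionality; intros xs. unfold env_ind.
    rewrite shift1_Lam_succ by apply posify_ge1. reflexivity.
  - rewrite EX_posify by (auto; apply (depends_on_first_mono N); auto).
    apply EX_indep; auto.
Qed.

Lemma EX_shift1_zero_start N E : depends_on_prefix N E ->
  EX p (S N) (env_ind 0 (fun y => E (shift 1 y)))
    = Series (fun x => p (S x) * EX p N (env_ind x E)).
Proof.
  intros HE.
  rewrite <- EX_posify, EX_S by (auto; apply env_ind_depends, depends_on_prefix_shift1; auto).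
  rewrite Series_split_first by (apply (ex_series_EX_step p N
    (fun xs => env_ind 0 (fun y => E (shift 1 y)) (posify xs)) 1); auto;
    intros xs; apply ind_bounds).
  rewrite Hpos, Rmult_0_l, Rplus_0_l. apply Series_eq_ext; intros x. f_equal.
  rewrite <- (EX_posify p N (env_ind x E)) by (auto; apply env_ind_depends; auto).
  f_equal. apply functional_extensionality; intros xs. unfold env_ind.
  rewrite posify_ncons. simpl (Nat.max 1 (S x)).
  rewrite shift1_Lam_zero by apply posify_ge1. reflexivity.
Qed.

Lemma envP_shift1 N E : depends_on_prefix N E ->
  envP p (S N) (fun y => E (shift 1 y)) = envP p N E.
Proof.
  intros HE. rewrite !envP_unfold.
  set (F := fun r => EX p N (env_ind r E)).
  assert (HF : forall r, 0 <= F r <= 1) by (intros; apply EX_env_ind_bounds).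
  assert (Hpmul : ex_series (fun x => p (S x) * F x)).
  { apply (ex_series_nonneg_le _ (fun x => p (S x)));
      [|apply (ex_series_incr_1 p), pmf_ex_series; auto].
    intros x. pose proof (proj1 Hp (S x)). specialize (HF x). split; [apply Rmult_le_pos; lra|].
    rewrite <- (Rmult_1_r (p (S x))) at 2. apply Rmult_le_compat_l; lra. }
  assert (Hrmul : ex_series (fun r => prho p (S r) * F r)).
  { apply (ex_series_incr_1 (fun r => prho p r * F (pred r))), ex_series_prho_mul.
    intros; apply HF. }
  rewrite Series_split_first by (apply ex_series_prho_mul; intros; apply EX_env_ind_bounds).
  rewrite EX_shift1_zero_start by auto.
  rewrite (Series_eq_ext (fun k => _ * EX p (S N) _) (fun r => prho p (S r) * F r))
    by (intros; rewrite EX_shift1_succ_start; auto).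
  rewrite <- Series_scal, <- Series_add by (auto; apply (ex_series_scal_l _ _ Hpmul)).
  apply Series_eq_ext. intros r. fold (F r). rewrite (prho_succ p r Hp Hpos). ring.
Qed.

Lemma envP_shift s N K E : depends_on_prefix K E -> (s + K <= N)%nat ->
  envP p N (fun y => E (shift s y)) = envP p K E.
Proof.
  revert N. induction s as [|s IH]; intros N HE HN.
  - rewrite (envP_ext N _ E); [apply envP_horizon; auto|].
    intros y. apply HE. intros i _. unfold shift. f_equal; lia.
  - destruct N as [|N]; [lia|].
    rewrite (envP_ext (S N) _ (fun y => (fun y => E (shift s y)) (shift 1 y))).
    + rewrite (envP_shift1 N (fun y => E (shift s y))); [apply IH; auto; lia|].
      intros y y' Hy. apply HE. intros i Hi. apply Hy. lia.
    + intros y. apply HE. intros i _. unfold shift. f_equal; lia.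
Qed.

Definition envE (N : nat) (g : (nat -> bool) -> R) : R :=
  Series (fun r => prho p r * EX p N (fun xs => g (Lam r xs))).

Lemma envP_envE N E : envP p N E = envE N (fun y => ind (E y)).
Proof. reflexivity. Qed.

Lemma ex_series_envE N g B : bounded_by B g ->
  ex_series (fun r => prho p r * EX p N (fun xs => g (Lam r xs))).
Proof.
  intros Hg. apply (ex_series_nonneg_le _ (fun r => B * prho p r));
    [|apply (ex_series_scal_l B (prho p)); auto].
  intros r. pose proof (EX_bounded p N Hp (fun xs => g (Lam r xs)) B (fun xs => Hg _)).
  specialize (Hrho_nonneg r). split; [apply Rmult_le_pos; lra|].
  rewrite Rmult_comm. apply Rmult_le_compat_r; lra.
Qed.

Lemma envE_add N g g' B B' : bounded_by B g -> bounded_by B' g' ->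
  envE N (fun y => g y + g' y) = envE N g + envE N g'.
Proof.
  intros Hg Hg'. unfold envE. rewrite <- Series_add by (eapply ex_series_envE; eauto).
  apply Series_eq_ext; intros r. rewrite (EX_add p N Hp _ _ B B'); [ring| |]; intros xs; auto.
Qed.

Lemma envE_nonneg N g B : bounded_by B g -> 0 <= envE N g.
Proof.
  intros Hg. apply Series_nonneg; [|eapply ex_series_envE; eauto]. intros r.
  apply Rmult_le_pos; auto. apply (EX_bounded p N Hp _ B). intros xs; apply Hg.
Qed.

Lemma envE_mono N g g' B : bounded_by B g -> bounded_by B g' -> (forall y, g y <= g' y) ->
  envE N g <= envE N g'.
Proof.
  intros Hg Hg' Hle.
  assert (Hd : bounded_by B (fun y => g' y - g y)).
  { intros y; specialize (Hg y); specialize (Hg' y); specialize (Hle y); lra. }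
  replace (envE N g') with (envE N (fun y => g y + (g' y - g y))).
  - rewrite (envE_add N g _ B B); auto. pose proof (envE_nonneg N _ B Hd). lra.
  - unfold envE. do 2 f_equal. apply functional_extensionality; intros r.
    do 2 f_equal. apply functional_extensionality; intros; ring.
Qed.

Lemma envE_zero N : envE N (fun _ => 0) = 0.
Proof.
  unfold envE. rewrite (Series_eq_ext _ (fun _ => 0)); [apply Series_zero|].
  intros r. rewrite EX_const; auto; ring.
Qed.

Lemma envE_fsum N n (g : nat -> (nat -> bool) -> R) B : 0 <= B ->
  (forall i, bounded_by B (g i)) ->
  envE N (fun y => fsum n (fun i => g i y)) = fsum n (fun i => envE N (g i)).
Proof.
  intros HB Hg. induction n as [|n IH]; simpl fsum; [apply envE_zero|].
  rewrite (envE_add N _ _ (INR n * B) B), IH; auto.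
  intros y. apply fsum_bounds. intros; apply Hg.
Qed.

Lemma envP_le_sum_separated_pairs N m
  (B : nat -> (nat -> bool) -> Prop) (C : (nat -> bool) -> Prop) :
  (forall y, C y -> exists i1 i2,
     (i2 < m)%nat /\ (i1 + 2 <= i2)%nat /\ B i1 y /\ B i2 y) ->
  envP p N C <= fsum m (fun i1 => fsum m (fun i2 =>
    if (i1 + 2 <=? i2)%nat then envP p N (fun y => B i1 y /\ B i2 y) else 0)).
Proof.
  intros HC.
  set (T := fun i1 i2 y => if (i1 + 2 <=? i2)%nat then ind (B i1 y /\ B i2 y) else 0).
  assert (HT : forall i1 i2, bounded_by 1 (T i1 i2)).
  { intros i1 i2 y. unfold T. destruct (i1 + 2 <=? i2)%nat; [apply ind_bounds|lra]. }
  assert (HT1 : forall i1, bounded_by (INR m * 1) (fun y => fsum m (fun i2 => T i1 i2 y))).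
  { intros i1 y. apply fsum_bounds. intros; apply HT. }
  set (M := 1 + INR m * (INR m * 1)).
  assert (HM : 0 <= INR m * (INR m * 1)) by (pose proof (pos_INR m); nra).
  rewrite envP_envE.
  apply Rle_trans with (envE N (fun y => fsum m (fun i1 => fsum m (fun i2 => T i1 i2 y)))).
  - apply (envE_mono N _ _ M).
    + intros y. pose proof (ind_bounds (C y)). unfold M. lra.
    + intros y. pose proof (fsum_bounds m (fun i1 => fsum m (fun i2 => T i1 i2 y)) (INR m * 1)
        ltac:(intros; apply HT1)). unfold M. lra.
    + intros y. destruct (classic (C y)) as [Hy|Hy].
      * rewrite ind_true by auto. destruct (HC y Hy) as [i1 [i2 [Hi2 [H12 [H1 H2]]]]].
        eapply Rle_trans; [|apply (fsum_term_le _ _ i1); [intros; apply HT1|lia]].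
        eapply Rle_trans; [|apply (fsum_term_le _ _ i2); [intros; apply HT|lia]].
        unfold T. destruct (Nat.leb_spec (i1 + 2) i2); [|lia]. rewrite ind_true; auto; lra.
      * rewrite ind_false by auto. apply (fsum_bounds m _ (INR m * 1)). intros; apply HT1.
  - rewrite (envE_fsum N m _ (INR m * 1)); auto; [|pose proof (pos_INR m); lra].
    apply fsum_mono. intros i1 _. rewrite (envE_fsum N m _ 1); auto; [|lra].
    apply fsum_mono. intros i2 _. unfold T. destruct (i1 + 2 <=? i2)%nat.
    + rewrite <- envP_envE. lra.
    + rewrite envE_zero. lra.
Qed.

End Stationarity.

Lemma floorN_le x : 0 <= x -> INR (floorN x) <= x.
Proof.
  intros Hx. unfold floorN. destruct (base_Int_part x) as [H1 H2].
  assert (0 <= Int_part x)%Z by (apply le_IZR, IZR_le, Z.lt_pred_le, lt_IZR; simpl; lra).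
  rewrite INR_IZR_INZ, Z2Nat.id; auto.
Qed.

Lemma floorN_ge3 x : 3 <= x -> (3 <= floorN x)%nat.
Proof.
  intros Hx. unfold floorN. destruct (base_Int_part x) as [H1 H2].
  assert (2 < Int_part x)%Z by (apply lt_IZR; simpl; lra). lia.
Qed.

Section Blocks.

Variables (L0 : nat) (g : R).

Lemma Lsc_S k : Lsc L0 g (S k) = (Lsc L0 g k * mfac L0 g k)%nat.
Proof. reflexivity. Qed.

Lemma Lsc_mfac_lower : 1 < g -> Rpower (INR L0) (g - 1) >= 3 -> (2 <= L0)%nat ->
  forall k, (L0 <= Lsc L0 g k)%nat /\ (3 <= mfac L0 g k)%nat.
Proof.
  intros Hg H3 HL0.
  assert (Hm : forall k, (L0 <= Lsc L0 g k)%nat -> (3 <= mfac L0 g k)%nat).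
  { intros k Hk. apply floorN_ge3.
    apply Rle_trans with (Rpower (INR L0) (g - 1)); [lra|].
    apply Rle_Rpower_l; [lra|]. split; [apply lt_0_INR; lia|apply le_INR; auto]. }
  induction k as [|k [IH1 IH2]]; [split; [simpl; lia|apply Hm; simpl; lia]|].
  assert (L0 <= Lsc L0 g (S k))%nat by (rewrite Lsc_S; nia). auto.
Qed.

Lemma bad_shift k : forall j a y,
  bad L0 g (shift (a * Lsc L0 g k) y) k j <-> bad L0 g y k (j + a).
Proof.
  induction k as [|k IH]; intros j a y.
  - simpl. unfold shift. split.
    + intros H i Hi. replace i with (i - a * L0 + a * L0)%nat by nia. apply H. nia.
    + intros H i Hi. apply H. nia.
  - rewrite Lsc_S. set (m := mfac L0 g k).
    replace (a * (Lsc L0 g k * m))%nat with ((a * m) * Lsc L0 g k)%nat by ring.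
    simpl bad. fold m. split.
    + intros [i1 [i2 [H1 [H2 [H3 [H4 H5]]]]]]. exists (i1 + a * m)%nat, (i2 + a * m)%nat.
      rewrite <- !IH. repeat split; auto; nia.
    + intros [i1 [i2 [H1 [H2 [H3 [H4 H5]]]]]]. exists (i1 - a * m)%nat, (i2 - a * m)%nat.
      rewrite !IH. replace (i1 - a * m + a * m)%nat with i1 by nia.
      replace (i2 - a * m + a * m)%nat with i2 by nia. repeat split; auto; nia.
Qed.

Lemma bad_ext k : forall j y y',
  (forall i, (j * Lsc L0 g k <= i < (j + 1) * Lsc L0 g k)%nat -> y i = y' i) ->
  (bad L0 g y k j <-> bad L0 g y' k j).
Proof.
  induction k as [|k IH]; intros j y y' Hy.
  - simpl in *. split; intros H i Hi; [rewrite <- Hy|rewrite Hy]; auto.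
  - rewrite Lsc_S in Hy. set (m := mfac L0 g k) in *. simpl bad. fold m.
    assert (Hs : forall i, (j * m <= i < (j + 1) * m)%nat -> (bad L0 g y k i <-> bad L0 g y' k i)).
    { intros i Hi. apply IH. intros i' Hi'. apply Hy. nia. }
    split; intros [i1 [i2 [H1 [H2 [H3 [H4 H5]]]]]]; exists i1, i2;
      do 3 (split; [assumption|]); (split; [apply (Hs i1 H1)|apply (Hs i2 H2)]); assumption.
Qed.

End Blocks.

Section Recursion.

Variables (p : nat -> R) (c1 eps : R) (L0 : nat) (g : R).
Hypotheses (Hp : is_pmf p) (Hpos : positive_valued p)
  (Hrho_nonneg : forall r, 0 <= prho p r) (Hrho : ex_series (prho p))
  (Hmix : forall (m n M : nat) (A B : (nat -> bool) -> Prop),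
      (1 <= n)%nat -> dep_on A 0 m -> dep_on B (m + n) M ->
      envP p (S M) (fun y => A y /\ B y)
        <= envP p (S M) A * envP p (S M) B + c1 * Rpower (INR n) (- eps))
  (Heps : 0 < eps) (Hc1 : 0 < c1).

Lemma bad_depends_on_prefix k :
  depends_on_prefix (Lsc L0 g k) (fun y => bad L0 g y k 0).
Proof. intros y y' Hy. apply bad_ext. intros i Hi. apply Hy. lia. Qed.

Lemma envP_bad_subblock k i : (i < mfac L0 g k)%nat ->
  envP p (Lsc L0 g (S k)) (fun y => bad L0 g y k i)
    = envP p (Lsc L0 g k) (fun y => bad L0 g y k 0).
Proof.
  intros Hi.
  rewrite (envP_ext p _ _ (fun y => bad L0 g (shift (i * Lsc L0 g k) y) k 0)).
  - apply envP_shift with (E := fun y => bad L0 g y k 0); auto using bad_depends_on_prefix.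
    rewrite Lsc_S. nia.
  - intros y. rewrite bad_shift. reflexivity.
Qed.

Lemma envP_bad_pair k i1 i2 : (1 <= Lsc L0 g k)%nat ->
  (i1 + 2 <= i2)%nat -> (i2 < mfac L0 g k)%nat ->
  envP p (Lsc L0 g (S k)) (fun y => bad L0 g y k i1 /\ bad L0 g y k i2)
    <= Rsqr (envP p (Lsc L0 g k) (fun y => bad L0 g y k 0))
       + c1 * Rpower (INR (Lsc L0 g k)) (- eps).
Proof.
  intros HL H12 H2m. set (L := Lsc L0 g k) in *.
  assert (HN : Lsc L0 g (S k) = S (Lsc L0 g (S k) - 1)) by (rewrite Lsc_S; nia).
  rewrite HN.
  eapply Rle_trans.
  { apply (Hmix ((i1 + 1) * L - 1) ((i2 - i1 - 1) * L + 1) (Lsc L0 g (S k) - 1)).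
    - nia.
    - intros y y' Hy. apply bad_ext. intros i Hi. apply Hy. fold L in Hi. lia.
    - intros y y' Hy. apply bad_ext. intros i Hi. apply Hy. fold L in Hi.
      rewrite Lsc_S. fold L. nia. }
  rewrite <- HN, !envP_bad_subblock by lia.
  assert (Rpower (INR ((i2 - i1 - 1) * L + 1)) (- eps) <= Rpower (INR L) (- eps)).
  { rewrite !Rpower_Ropp. apply Rinv_le_contravar; [apply Rpower_gt0|].
    apply Rle_Rpower_l; [lra|]. split; [apply lt_0_INR; lia|apply le_INR; nia]. }
  unfold Rsqr. apply Rplus_le_compat_l, Rmult_le_compat_l; lra.
Qed.

Lemma envP_bad_succ_le k Q : (1 <= Lsc L0 g k)%nat ->
  envP p (Lsc L0 g k) (fun y => bad L0 g y k 0) <= Q ->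
  envP p (Lsc L0 g (S k)) (fun y => bad L0 g y (S k) 0)
    <= INR (mfac L0 g k) * (INR (mfac L0 g k) * (Rsqr Q + c1 * Rpower (INR (Lsc L0 g k)) (- eps))).
Proof.
  intros HL HQ. set (m := mfac L0 g k).
  assert (0 <= envP p (Lsc L0 g k) (fun y => bad L0 g y k 0)) by (apply envP_nonneg; auto).
  assert (Hpair : forall i1 i2, (i2 < m)%nat ->
    (if (i1 + 2 <=? i2)%nat
     then envP p (Lsc L0 g (S k)) (fun y => bad L0 g y k i1 /\ bad L0 g y k i2) else 0)
      <= Rsqr Q + c1 * Rpower (INR (Lsc L0 g k)) (- eps)).
  { intros i1 i2 Hi2. pose proof (Rpower_gt0 (INR (Lsc L0 g k)) (- eps)).
    assert (0 <= c1 * Rpower (INR (Lsc L0 g k)) (- eps)) by (apply Rmult_le_pos; lra).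
    pose proof (Rle_0_sqr Q). destruct (Nat.leb_spec (i1 + 2) i2); [|lra].
    eapply Rle_trans; [apply envP_bad_pair; auto|]. unfold Rsqr. nra. }
  eapply Rle_trans.
  { apply envP_le_sum_separated_pairs with (m := m) (B := fun i y => bad L0 g y k i); auto.
    intros y [i1 [i2 [H1 [H2 [H12 [B1 B2]]]]]]. fold m in H1, H2.
    destruct H12; [exists i1, i2|exists i2, i1]; repeat split; auto; lia. }
  rewrite <- !fsum_const. apply fsum_mono. intros i1 _. apply fsum_mono. intros i2 Hi2.
  apply Hpair; auto.
Qed.

End Recursion.

Lemma bad0_Lam_iff L0 g r xs : bad L0 g (Lam r xs) 0 0 <-> (L0 <= r)%nat.
Proof.
  simpl. split.
  - intros H. destruct (Nat.le_gt_cases L0 r) as [|Hlt]; auto.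
    assert (Lam r xs r = true) by (apply Lam_spec; exists 0%nat; simpl; split; auto; lia).
    rewrite H in *; [discriminate|lia].
  - intros Hr i Hi. destruct (Lam r xs i) eqn:E; auto. apply Lam_spec in E.
    destruct E as [j [_ Ej]]. pose proof (Xpos_ge_start r xs j). lia.
Qed.

Lemma envP_bad0 p L0 g : is_pmf p ->
  envP p L0 (fun y => bad L0 g y 0 0) = Series (fun r => prho p r * ind (L0 <= r)%nat).
Proof.
  intros Hp. apply Series_eq_ext; intros r. f_equal.
  rewrite <- (EX_const p L0 (ind (L0 <= r)%nat)) by auto. f_equal.
  apply functional_extensionality; intros xs. apply ind_ext, bad0_Lam_iff.
Qed.

Lemma prho_tail_markov p eps L : (forall r, 0 <= prho p r) -> 0 < eps -> (1 <= L)%nat ->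
  ex_series (fun r => prho p r * rpow (INR r) eps) ->
  Series (fun r => prho p r * ind (L <= r)%nat)
    <= / Rpower (INR L) eps * Series (fun r => prho p r * rpow (INR r) eps).
Proof.
  intros Hrho0 Heps HL Hex. set (RL := Rpower (INR L) eps).
  assert (HRL : 0 < / RL) by apply Rinv_0_lt_compat, Rpower_gt0.
  rewrite <- Series_scal by auto. apply Series_mono; [|apply (ex_series_scal_l _ _ Hex)].
  intros r. pose proof (Hrho0 r). pose proof (rpow_nonneg (INR r) eps).
  split; [apply Rmult_le_pos; auto; apply ind_bounds|].
  destruct (Nat.le_gt_cases L r) as [Hr|Hr].
  - rewrite ind_true by auto.
    assert (RL <= rpow (INR r) eps).
    { unfold RL. destruct L as [|L']; [lia|].
      rewrite <- rpow_INR_succ. apply rpow_INR_mono; lia || lra. }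
    assert (1 <= / RL * rpow (INR r) eps).
    { rewrite <- (Rinv_l RL) by (apply Rgt_not_eq, Rpower_gt0). apply Rmult_le_compat_l; lra. }
    rewrite Rmult_1_r, (Rmult_comm (/ RL)), Rmult_assoc.
    rewrite <- (Rmult_1_r (prho p r)) at 1. apply Rmult_le_compat_l; lra.
  - rewrite ind_false by lia. rewrite Rmult_0_r. apply Rmult_le_pos; [lra|]. nra.
Qed.

Lemma recursion_le_next_scale (L m : nat) c1 eps alpha gamma :
  (2 <= L)%nat -> (1 <= m)%nat -> INR m <= Rpower (INR L) (gamma - 1) -> 0 < c1 ->
  0 < alpha <= eps / 2 -> 1 < gamma ->
  Rpower (INR L) (2 + 2 * alpha - gamma * alpha - 2 * gamma) >= c1 + 1 ->
  INR m * (INR m * (Rsqr (Rpower (INR L) (- alpha)) + c1 * Rpower (INR L) (- eps)))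
    <= Rpower (INR (L * m)) (- alpha).
Proof.
  intros HL Hm Hmg Hc1 Ha Hg H3. unfold Rsqr.
  set (x := INR L) in *. set (y := INR m) in *.
  assert (Hx : 2 <= x) by (unfold x; apply (le_INR 2) in HL; simpl in HL; lra).
  assert (Hy : 1 <= y) by (unfold y; apply (le_INR 1) in Hm; simpl in Hm; lra).
  assert (Hxe : Rpower x (- eps) <= Rpower x (- alpha) * Rpower x (- alpha)).
  { rewrite <- Rpower_plus. apply Rle_Rpower; lra. }
  assert (Hyy : y * y = Rpower y (2 + alpha) * Rpower y (- alpha)).
  { rewrite <- Rpower_plus. replace (2 + alpha + - alpha) with (1 + 1) by ring.
    rewrite Rpower_plus, Rpower_1; lra. }
  (* [m^(2+alpha) (1+c1) <= L^((gamma-1)(2+alpha)) L^c2 = L^alpha] *)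
  assert (Hkey : Rpower y (2 + alpha) * (1 + c1) <= Rpower x alpha).
  { replace (Rpower x alpha) with (Rpower x ((gamma - 1) * (2 + alpha))
      * Rpower x (2 + 2 * alpha - gamma * alpha - 2 * gamma))
      by (rewrite <- Rpower_plus; f_equal; ring).
    apply Rmult_le_compat; [left; apply Rpower_gt0|lra| |lra].
    rewrite <- Rpower_mult. apply Rle_Rpower_l; [lra|split; [lra|exact Hmg]]. }
  rewrite mult_INR. fold x y. rewrite <- Rpower_mult_distr by lra.
  set (A := Rpower x (- alpha)) in *. set (By := Rpower y (- alpha)) in *.
  assert (HA : 0 < A) by apply Rpower_gt0. assert (HB : 0 < By) by apply Rpower_gt0.
  assert (HAx : Rpower x alpha * A = 1).
  { unfold A. rewrite <- Rpower_plus. replace (alpha + - alpha) with 0 by ring.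
    apply Rpower_O; lra. }
  apply Rle_trans with (y * y * ((1 + c1) * (A * A))).
  - assert (0 <= c1 * Rpower x (- eps) <= c1 * (A * A)).
    { split; [left; apply Rmult_lt_0_compat; auto; apply Rpower_gt0|].
      apply Rmult_le_compat_l; lra. }
    replace (y * (y * (A * A + c1 * Rpower x (- eps))))
      with (y * y * (A * A + c1 * Rpower x (- eps))) by ring.
    apply Rmult_le_compat_l; nra.
  - rewrite Hyy. apply Rle_trans with (Rpower x alpha * (A * A * By)).
    + replace (Rpower y (2 + alpha) * By * ((1 + c1) * (A * A)))
        with ((Rpower y (2 + alpha) * (1 + c1)) * (A * A * By)) by ring.
      apply Rmult_le_compat_r; auto. left; repeat apply Rmult_lt_0_compat; auto.
    + replace (Rpower x alpha * (A * A * By)) with ((Rpower x alpha * A) * A * By) by ring.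
      rewrite HAx. lra.
Qed.

Lemma envP_bad0_le p eps alpha L0 g : is_pmf p -> (forall r, 0 <= prho p r) -> 0 < eps ->
  (1 <= L0)%nat -> ex_series (fun r => prho p r * rpow (INR r) eps) ->
  Rpower (INR L0) (eps - alpha) >= Series (fun r => prho p r * rpow (INR r) eps) ->
  envP p L0 (fun y => bad L0 g y 0 0) <= Rpower (INR L0) (- alpha).
Proof.
  intros Hp Hrho0 Heps HL0 Hex Hmoment.
  rewrite envP_bad0 by auto. eapply Rle_trans; [apply (prho_tail_markov p eps); auto|].
  replace (Rpower (INR L0) (- alpha))
    with (/ Rpower (INR L0) eps * Rpower (INR L0) (eps - alpha)).
  - apply Rmult_le_compat_l; [left; apply Rinv_0_lt_compat, Rpower_gt0|lra].
  - replace (eps - alpha) with (eps + - alpha) by ring. rewrite Rpower_plus.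
    field. apply Rgt_not_eq, Rpower_gt0.
Qed.

Theorem lemma3p1
  (p : nat -> R) (eps c1 alpha gamma : R) (L0 : nat)
  (Hpmf : is_pmf p) (Hpos : positive_valued p) (Hap : aperiodic p)
  (Heps : 0 < eps)
  (Hmom : exists l, infinite_sum (fun i => p i * Rpower (INR i) (1 + eps)) l)
  (Hc1 : 0 < c1)
  (Hmix : forall (m n M : nat) (A B : (nat -> bool) -> Prop),
      (1 <= n)%nat -> dep_on A 0 m -> dep_on B (m + n) M ->
      envP p (S M) (fun y => A y /\ B y)
        <= envP p (S M) A * envP p (S M) B + c1 * Rpower (INR n) (- eps))
  (Halpha : 0 < alpha <= eps / 2)
  (Hgamma : 1 < gamma < 1 + alpha / (alpha + 2))
  (HL0i : Rpower (INR L0) (gamma - 1) >= 3)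
  (HL0ii : Rpower (INR L0) (eps - alpha)
             >= Series (fun k => prho p k * rpow (INR k) eps))
  (HL0iii : Rpower (INR L0) (2 + 2 * alpha - gamma * alpha - 2 * gamma) >= c1 + 1) :
  forall k : nat,
    envP p (Lsc L0 gamma k) (fun y => bad L0 gamma y k 0)
      <= Rpower (INR (Lsc L0 gamma k)) (- alpha).
Proof.
  clear Hap.
  pose proof (prho_nonneg p eps Hpmf Hpos Heps Hmom) as Hrho0.
  pose proof (prho_ex_series p eps Hpmf Hpos Heps Hmom) as Hrho.
  assert (HL0 : (2 <= L0)%nat).
  { destruct (Nat.le_gt_cases L0 1) as [H|H]; [rewrite Rpower_INR_le1 in HL0i by auto; lra|lia]. }
  assert (Hc2 : 0 <= 2 + 2 * alpha - gamma * alpha - 2 * gamma).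
  { assert (alpha / (alpha + 2) * (alpha + 2) = alpha) by (field; lra). nra. }
  intros k. induction k as [|k IH].
  - apply (envP_bad0_le p eps); auto using prho_moment_ex_series; simpl; lia.
  - destruct (Lsc_mfac_lower L0 gamma ltac:(lra) HL0i HL0 k) as [HLk Hmk].
    eapply Rle_trans.
    { apply (envP_bad_succ_le p c1 eps) with (Q := Rpower (INR (Lsc L0 gamma k)) (- alpha));
        auto; lia. }
    rewrite Lsc_S. apply recursion_le_next_scale with (gamma := gamma); auto; try lia; try lra.
    + apply floorN_le. left; apply Rpower_gt0.
    + apply Rle_ge. eapply Rle_trans; [apply Rge_le, HL0iii|].
      apply Rle_Rpower_l; [lra|]. split; [apply lt_0_INR; lia|apply le_INR; auto].
Qed.
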